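(* Let $\mathcal L$ be a finite language of relation and/or constant symbols, $\mathcal H$ a hereditary $\mathcal L$-property, and $k\ge2$ an integer. If $\mathcal H$ has infinitely many components of size $k$, then $|\mathcal H_n|\ge n^{(1-\frac1k-o(1))n}$.
   Context: A hereditary $\mathcal L$-property is a class of $\mathcal L$-structures closed under isomorphism and substructures; $\mathcal H_n$ is the set of members with universe $[n]$. For an $\mathcal L$-structure $\mathcal M$ and $a,b\in M$, a path from $a$ to $b$ is a finite sequence of tuples $\bar a_1,\dots,\bar a_m$ of elements of $M$ such that each $\bar a_i\in R_i^{\mathcal M}$ for some relation symbol $R_i$ of $\mathcal L$, consecutive tuples share an element, $a$ occurs in $\bar a_1$ and $b$ occurs in $\bar a_m$. A set $A\subseteq M$ is connected if any two distinct elements of $A$ are joined by a path all of whose tuples consist of elements of $A$. A component of $\mathcal M$ is a nonempty connected set $A$ such that whenever $a\in A$ and there is a path from $a$ to $c$, then $c\in A$. $\mathcal H$ has infinitely many components of size $k$ if some $\mathcal M\in\mathcal H$ has infinitely many distinct components of size $k$. *)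

From HB Require Import structures.
From mathcomp Require Import all_boot.
From Stdlib Require List.
From Stdlib Require Import Reals.

Set Implicit Arguments.
Unset Strict Implicit.
Unset Printing Implicit Defensive.

Record language := Language {
  nR : nat;
  ar : 'I_nR -> nat;
  nC : nat }.

Record structure (L : language) (M : Type) := Structure {
  rel : forall i : 'I_(nR L), (ar i).-tuple M -> Prop;
  cst : 'I_(nC L) -> M }.

Arguments rel {L M} s i t.
Arguments cst {L M} s c.

Definition isomorphic (L : language) (M N : Type)
    (S : structure L M) (T : structure L N) : Prop :=
  exists f : M -> N, bijective f /\
    (forall i t, rel S i t <-> rel T i (map_tuple f t)) /\
    (forall c, f (cst S c) = cst T c).

Definition induced (L : language) (M : Type) (S : structure L M) (A : M -> Prop)
    (hA : forall c, A (cst S c)) : structure L {x : M | A x} :=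
  @Structure L {x : M | A x}
    (fun i t => rel S i (map_tuple (@proj1_sig M A) t))
    (fun c => exist A (cst S c) (hA c)).

Definition hereditary (L : language) (H : forall M : Type, structure L M -> Prop) : Prop :=
  (forall (M N : Type) (S : structure L M) (T : structure L N),
      isomorphic S T -> H M S -> H N T) /\
  (forall (M : Type) (S : structure L M) (A : M -> Prop)
      (hA : forall c, A (cst S c)), (exists x, A x) ->
      H M S -> H {x : M | A x} (@induced L M S A hA)).

Definition rtuple (L : language) (M : Type) : Type :=
  {i : 'I_(nR L) & (ar i).-tuple M}.

Definition occurs (L : language) (M : Type) (x : M) (q : rtuple L M) : Prop :=
  List.In x (tval (tagged q)).

Fixpoint chained (L : language) (M : Type) (p : list (rtuple L M)) : Prop :=
  match p with
  | q1 :: ((q2 :: _) as p') => (exists x, occurs x q1 /\ occurs x q2) /\ chained p'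
  | _ => True
  end.

Definition path_in (L : language) (M : Type) (S : structure L M) (A : M -> Prop)
    (a b : M) (p : list (rtuple L M)) : Prop :=
  (forall q, List.In q p ->
      rel S (tag q) (tagged q) /\ (forall y, occurs y q -> A y)) /\
  chained p /\
  (exists q0 p0, p = q0 :: p0 /\ occurs a q0) /\
  (exists p1 q1, p = p1 ++ q1 :: nil /\ occurs b q1).

Definition connected_set (L : language) (M : Type) (S : structure L M) (A : M -> Prop) : Prop :=
  forall a b, A a -> A b -> a <> b -> exists p, path_in S A a b p.

Definition component (L : language) (M : Type) (S : structure L M) (C : M -> Prop) : Prop :=
  (exists x, C x) /\ connected_set S C /\
  (forall a c, C a -> (exists p, path_in S (fun _ => True) a c p) -> C c).

Definition has_size (M : Type) (C : M -> Prop) (k : nat) : Prop :=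
  exists l : list M, List.NoDup l /\ length l = k /\ (forall x, C x <-> List.In x l).

Definition inf_components (L : language) (M : Type) (S : structure L M) (k : nat) : Prop :=
  exists C : nat -> M -> Prop,
    (forall j, component S (C j) /\ has_size (C j) k) /\
    (forall i j, i <> j -> ~ (forall x, C i x <-> C j x)).

Definition has_inf_components (L : language) (H : forall M : Type, structure L M -> Prop)
    (k : nat) : Prop :=
  exists (M : Type) (S : structure L M), H M S /\ inf_components S k.

(* Codes of L-structures with universe [n] = 'I_n: the set of relation tuples
   and the interpretation of the constants.  Decoding is a bijection between
   codes and L-structures on 'I_n. *)
Definition code (L : language) (n : nat) : Type :=
  ({set {i : 'I_(nR L) & (ar i).-tuple 'I_n}} * {ffun 'I_(nC L) -> 'I_n})%type.

Definition decode (L : language) (n : nat) (c : code L n) : structure L 'I_n :=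
  @Structure L 'I_n (fun i t => Tagged (fun i => (ar i).-tuple 'I_n) t \in c.1)
                    (fun j => c.2 j).

(* |H_n| >= x : there are at least x distinct members of H with universe [n]. *)
Definition card_Hn_ge (L : language) (H : forall M : Type, structure L M -> Prop)
    (n : nat) (x : R) : Prop :=
  exists s : seq (code L n), uniq s /\
    (forall c, c \in s -> H 'I_n (decode c)) /\ (x <= INR (size s))%R.

(* Fix S in H with infinitely many components of size k.  A component that
   contains a constant is determined by it, so all but finitely many of them
   avoid the constants; pick m + 1 such components C_0, ..., C_m.  Write
   n = c0 + r + k m, where c0 is the number of distinct constants and r < k.
   For every (k-1)-tuple s of permutations of [m], embed [n] into S: onto the
   constants, onto r elements of the spare component C_m, and onto a k x m grid
   whose cell (0, j) is the first element of C_j and whose cell (l, j), l > 0,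
   is the l-th element of C_(s_l j).  Since H is hereditary, every embedding
   pulls back a member of H_n, and different s give different members: in the
   pulled-back structure the cell (l, j) lies in the component of the cell
   (0, s_l j).  Hence |H_n| >= (m!)^(k-1), and m! >= (m/e)^m
   with k m > n - c0 - k turns this into n^((1 - 1/k - eps) n) for large n. *)

From Stdlib Require Import Reals Lra.
From mathcomp Require Import all_boot zify fingroup perm boolp.

Set Implicit Arguments.
Unset Strict Implicit.
Unset Printing Implicit Defensive.

Section InversePoint.
Variables (D : finType) (M : Type) (d0 : D) (f : D -> M).

Definition inv_pt (y : M) : D := odflt d0 [pick d | `[< f d = y >]].

Lemma inv_ptK (y : M) : (exists d, f d = y) -> f (inv_pt y) = y.
Proof.
rewrite /inv_pt; case: pickP => [d /asboolP //| none [d fd]].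
by have := none d; rewrite (asboolT fd).
Qed.

Lemma inv_pt_id : injective f -> forall d, inv_pt (f d) = d.
Proof. by move=> f_inj d; apply: f_inj; apply: inv_ptK; exists d. Qed.
End InversePoint.

Section Pullback.
Variables (L : language) (M : Type) (S : structure L M).

Definition pullback_code (n : nat) (d0 : 'I_n) (f : 'I_n -> M) : code L n :=
  ([set q | `[< rel S (tag q) (map_tuple f (tagged q)) >]],
   [ffun c => inv_pt d0 f (cst S c)]).

Lemma pullback_codeE n d0 (f : 'I_n -> M) i (u : (ar i).-tuple 'I_n) :
  rel (decode (pullback_code d0 f)) i u <-> rel S i (map_tuple f u).
Proof. by rewrite /= inE; split => /asboolP. Qed.

Lemma pullback_code_in (H : forall M : Type, structure L M -> Prop) n d0 (f : 'I_n -> M) :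
  hereditary H -> H M S -> injective f -> (forall c, exists p, f p = cst S c) ->
  H 'I_n (decode (pullback_code d0 f)).
Proof.
move=> [H_iso H_sub] HS f_inj f_cst.
pose A y := exists p, f p = y.
have fK y : A y -> f (inv_pt d0 f y) = y by exact: inv_ptK.
apply: (H_iso _ _ _ _ _ (H_sub M S A f_cst (ex_intro _ (f d0) (ex_intro _ d0 erefl)) HS)).
exists (fun x => inv_pt d0 f (sval x)); split; [|split].
- exists (fun p => exist A (f p) (ex_intro _ p erefl)) => [[y Ay]|p] /=.
    by apply: eq_sig_hprop => [y' ? ?|]; [exact: Prop_irrelevance | exact: fK].
  by rewrite inv_pt_id.
- move=> i t; rewrite pullback_codeE.
  have -> // : map_tuple f (map_tuple (fun x : {y | A y} => inv_pt d0 f (sval x)) t)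
               = map_tuple sval t.
  by apply: val_inj; rewrite /= -map_comp; apply: eq_map => -[y Ay]; exact: fK.
- by move=> c /=; rewrite ffunE.
Qed.
End Pullback.

Lemma card_Hn_ge_embeddings (L : language) (H : forall M : Type, structure L M -> Prop)
    (M : Type) (S : structure L M) (D T : finType) (d0 : D) (f : T -> D -> M) :
  hereditary H -> H M S ->
  (forall s, injective (f s)) -> (forall s c, exists d, f s d = cst S c) ->
  (forall s t, (forall i (u : (ar i).-tuple D),
                  rel S i (map_tuple (f s) u) <-> rel S i (map_tuple (f t) u)) -> s = t) ->
  card_Hn_ge H #|D| (INR #|T|).
Proof.
move=> hered HS f_inj f_cst f_rel_inj.
pose g s (p : 'I_#|D|) := f s (enum_val p).
have gE s i (u : (ar i).-tuple D) : map_tuple (g s) (map_tuple enum_rank u) = map_tuple (f s) u.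
  by apply: val_inj; rewrite /= -map_comp; apply: eq_map => d /=; rewrite /g enum_rankK.
pose code_of s := pullback_code S (enum_rank d0) (g s).
exists (map code_of (enum T)); split; [|split].
- rewrite map_inj_uniq ?enum_uniq // => s t st; apply: f_rel_inj => i u.
  by rewrite -!gE -!(pullback_codeE S (enum_rank d0)) -/(code_of s) -/(code_of t) st.
- move=> _ /mapP[s _ ->]; apply: pullback_code_in => // [p q /f_inj/enum_val_inj // | c].
  by have [d <-] := f_cst s c; exists (enum_rank d); rewrite /g enum_rankK.
- by rewrite size_map -cardE; apply: Rle_refl.
Qed.

Section Components.
Variables (L : language) (M : Type) (S : structure L M).

Definition map_rtuple (g : M -> M) (q : rtuple L M) : rtuple L M :=
  Tagged (fun i => (ar i).-tuple M) (map_tuple g (tagged q)).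

Lemma occurs_map g x q : occurs x q -> occurs (g x) (map_rtuple g q).
Proof. exact: List.in_map. Qed.

Lemma chained_map g p : chained p -> chained (List.map (map_rtuple g) p).
Proof.
elim: p => [|q1 [|q2 p] IH] //= [[x [x_q1 x_q2]] p_ch].
by split; [exists (g x); split; exact: occurs_map | exact: IH].
Qed.

Lemma path_in_map (g : M -> M) (A : M -> Prop) a b p :
  path_in S A a b p ->
  (forall q, List.In q p -> rel S (tag q) (map_tuple g (tagged q))) ->
  path_in S (fun _ => True) (g a) (g b) (List.map (map_rtuple g) p).
Proof.
move=> [_ [p_ch [[q0 [p0 [p_q0 a_q0]]] [p1 [q1 [p_q1 b_q1]]]]]] g_rel.
split; [|split; [|split]].
- by move=> _ /List.in_map_iff[q [<- q_p]]; split => //; exact: (g_rel q q_p).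
- exact: chained_map.
- exists (map_rtuple g q0), (List.map (map_rtuple g) p0).
  by rewrite p_q0; split => //; exact: occurs_map.
- exists (List.map (map_rtuple g) p1), (map_rtuple g q1).
  by rewrite p_q1 List.map_app; split => //; exact: occurs_map.
Qed.

Lemma path_in_weaken (A : M -> Prop) a b p : path_in S A a b p -> path_in S (fun _ => True) a b p.
Proof. by move=> [p_rel p_rest]; split => // q /p_rel[]. Qed.

Lemma component_sub (C1 C2 : M -> Prop) x :
  component S C1 -> component S C2 -> C1 x -> C2 x -> forall y, C1 y -> C2 y.
Proof.
move=> [_ [C1_conn _]] [_ [_ C2_closed]] x1 x2 y y1.
have [<- //|xy] := EM (x = y).
have [p p_xy] := C1_conn x y x1 y1 xy.
by apply: (C2_closed x) => //; exists p; exact: path_in_weaken p_xy.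
Qed.

Lemma components_eq (C1 C2 : M -> Prop) x :
  component S C1 -> component S C2 -> C1 x -> C2 x -> forall y, C1 y <-> C2 y.
Proof. by move=> C1c C2c x1 x2 y; split; apply: component_sub; eassumption. Qed.

Lemma component_map (C C' : M -> Prop) (g : M -> M) a b :
  component S C -> component S C' -> C a -> C b -> C' (g a) ->
  (forall i t, (forall y, List.In y (tval t) -> C y) -> rel S i t -> rel S i (map_tuple g t)) ->
  C' (g b).
Proof.
move=> [_ [C_conn _]] [_ [_ C'_closed]] Ca Cb C'ga g_rel.
have [<- //|ab] := EM (a = b).
have [p p_ab] := C_conn a b Ca Cb ab.
apply: (C'_closed (g a)) => //; exists (List.map (map_rtuple g) p).
apply: (path_in_map p_ab) => q /p_ab.1[q_rel q_C].
exact: g_rel q_C q_rel.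
Qed.
End Components.

Lemma has_size_enum (M : Type) (A : M -> Prop) (n : nat) (x0 : M) :
  has_size A n -> exists e : 'I_n -> M, injective e /\ forall x, A x <-> exists i, e i = x.
Proof.
move=> [l [l_uniq [l_size l_A]]]; exists (fun i => List.nth i l x0); split.
  move=> i j /(List.NoDup_nth l x0).1 eq_ij; apply: val_inj.
  by apply: eq_ij => //; rewrite l_size; apply/ltP.
move=> x; rewrite l_A; split=> [/(List.In_nth _ _ x0)[i [i_l <-]] | [i <-]].
  by rewrite l_size in i_l; exists (Ordinal (introT ltP i_l)).
by apply: List.nth_In; rewrite l_size; apply/ltP.
Qed.

Lemma mem_In (T : eqType) (x : T) (s : seq T) : x \in s -> List.In x s.
Proof. by elim: s => //= y s IH; rewrite inE => /orP[/eqP ->|/IH]; [left | right]. Qed.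

Lemma constants_has_size (L : language) (M : Type) (S : structure L M) :
  exists c0, has_size (fun x => exists c, cst S c = x) c0.
Proof.
pose l := List.nodup (fun x y : M => pselect (x = y)) (map (cst S) (enum 'I_(nC L))).
exists (length l), l; split; [exact: List.NoDup_nodup | split => // x].
rewrite List.nodup_In; split=> [[c <-] | /List.in_map_iff[c [<- _]]]; last by exists c.
by apply: List.in_map; apply/mem_In/mem_enum.
Qed.

Lemma components_avoiding_constants (L : language) (M : Type) (S : structure L M)
    (C : nat -> M -> Prop) :
  (forall j, component S (C j)) -> (forall i j, i <> j -> ~ (forall x, C i x <-> C j x)) ->
  forall K, exists g : 'I_K -> nat, injective g /\ forall i c, ~ C (g i) (cst S c).
Proof.
move=> C_comp C_dist K.
(* Distinct components are disjoint, so choosing a constant in each component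
   that meets one is injective: at most nC L indices are lost. *)
pose meets j := `[< exists c, C j (cst S c) >].
pose s := iota 0 (nC L + K).
pose good := filter (predC meets) s.
suff K_le : (K <= size good)%N.
  have good_i (i : 'I_K) : (i < size good)%N := leq_trans (ltn_ord i) K_le.
  exists (fun i => nth 0%N good i); split.
    move=> i i' /eqP; rewrite nth_uniq ?filter_uniq ?iota_uniq // => /eqP; exact: val_inj.
  move=> i c Ci; have := mem_nth 0%N (good_i i); rewrite mem_filter => /andP[/asboolPn + _].
  by apply; exists c.
have meets_le : (count meets s <= nC L)%N.
  pose phi j := [pick c | `[< C j (cst S c) >]].
  have phi_some j : meets j -> exists2 c, phi j = Some c & C j (cst S c).
    move=> /asboolP[c Cjc]; rewrite /phi.
    by case: pickP => [d /asboolP|/(_ c)]; [exists d | rewrite asboolT].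
  suff : (size (map phi (filter meets s)) <= size (map Some (enum 'I_(nC L))))%N.
    by rewrite !size_map -enumT size_enum_ord size_filter.
  apply: uniq_leq_size => [|x /mapP[j]].
    rewrite map_inj_in_uniq ?filter_uniq ?iota_uniq // => j j'.
    rewrite !mem_filter => /andP[/phi_some[c -> Cjc] _] /andP[/phi_some[c' -> Cj'c'] _] [cc'].
    apply: contrapT => jj'; apply: (C_dist _ _ jj'); apply: components_eq Cjc _ => //.
    by rewrite cc'.
  rewrite mem_filter => /andP[/phi_some[c -> _] _] ->.
  by rewrite map_f ?mem_enum.
have := count_predC meets s; rewrite /good size_filter size_iota; lia.
Qed.

Section Blocks.
Variables (L : language) (M : Type) (S : structure L M) (c0 r m k : nat).
Variable cst_pos : 'I_c0 -> M.
Hypothesis cst_pos_inj : injective cst_pos.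
Hypothesis cst_pos_onto : forall c, exists p, cst_pos p = cst S c.
Hypothesis cst_pos_cst : forall p, exists c, cst_pos p = cst S c.
Variable member : 'I_m.+1 -> 'I_k.+1 -> M.
Hypothesis member_inj : forall i l i' l', member i l = member i' l' -> i = i' /\ l = l'.
Hypothesis member_ncst : forall i l c, member i l <> cst S c.
Hypothesis member_component : forall i, component S (fun x => exists l, member i l = x).
Hypothesis r_le : (r <= k.+1)%N.

Local Notation col := (widen_ord (leqnSn m)).
Local Notation blocks := {ffun 'I_k -> {perm 'I_m}}.
Local Notation universe := ('I_c0 + 'I_r + ('I_m + 'I_k * 'I_m))%type.

(* A cell (l, j) : 'I_k * 'I_m lies at level lift ord0 l of the grid; the
   component ord_max provides the r padding points. *)
Definition block_embed (s : blocks) (d : universe) : M :=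
  match d with
  | inl (inl p) => cst_pos p
  | inl (inr p) => member ord_max (widen_ord r_le p)
  | inr (inl j) => member (col j) ord0
  | inr (inr (l, j)) => member (col (s l j)) (lift ord0 l)
  end.

Lemma block_embed_inj s : injective (block_embed s).
Proof.
have cst_pos_member p i l : cst_pos p <> member i l.
  by have [c ->] := cst_pos_cst p => /esym; apply: member_ncst.
have col_max (j : 'I_m) : col j <> ord_max by move/(congr1 val)/eqP; rewrite /= ltn_eqF.
have lift0_neq (l : 'I_k) : lift ord0 l <> ord0 by move/eqP; rewrite eq_sym (negbTE (neq_lift _ _)).
move=> [[p|p]|[j|[l j]]] [[p'|p']|[j'|[l' j']]] /=;
  do ?by [move/cst_pos_inj-> | move/cst_pos_member | move/esym/cst_pos_member].
all: move/member_inj => [ii' ll'].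
all: do ?by [case: (col_max _ ii') | case: (col_max _ (esym ii')) | case: (lift0_neq _ ll')
            | case: (lift0_neq _ (esym ll'))].
- by congr (inl (inr _)); apply: val_inj; move/(congr1 val): ll'.
- by congr (inr (inl _)); apply: val_inj; move/(congr1 val): ii'.
have ll : l = l' by apply: lift_inj ll'.
have jj : s l j = s l j' by apply: val_inj; move/(congr1 val): ii'; rewrite ll.
by rewrite ll (perm_inj jj).
Qed.

Lemma block_embed_cst s c : exists d, block_embed s d = cst S c.
Proof. by have [p <-] := cst_pos_onto c; exists (inl (inl p)). Qed.

Lemma block_embed_onto s (i : 'I_m) l : exists d, block_embed s d = member (col i) l.
Proof.
case: (unliftP ord0 l) => [l' ->|->]; last by exists (inr (inl i)).
by exists (inr (inr (l', (s l')^-1%g i))); rewrite /= permKV.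
Qed.

Lemma block_embed_rel_inj s t :
  (forall i (u : (ar i).-tuple universe),
     rel S i (map_tuple (block_embed s) u) <-> rel S i (map_tuple (block_embed t) u)) ->
  s = t.
Proof.
move=> st_rel; apply/ffunP => l; apply/permP => j; apply: contrapT => st_lj.
(* g moves the image of s to the image of t and preserves the relations inside
   the component i; it fixes member i ord0 but sends member i (lift ord0 l)
   into the component of index t l j. *)
pose i := col (s l j); pose C x := exists l', member i l' = x.
pose g x := block_embed t (inv_pt (inr (inl j)) (block_embed s) x).
have gK d : g (block_embed s d) = block_embed t d.
  by rewrite /g inv_pt_id //; exact: block_embed_inj.
have Cg : C (g (member i (lift ord0 l))).
  apply: (@component_map _ _ S C C g (member i ord0)); try exact: member_component.
  - by exists ord0.
  - by exists (lift ord0 l).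
  - by rewrite -[member i ord0]/(block_embed s (inr (inl (s l j)))) gK; exists ord0.
  move=> i' u u_C u_rel.
  pose v := map_tuple (inv_pt (inr (inl j)) (block_embed s)) u.
  have vK : map_tuple (block_embed s) v = u.
    apply: val_inj; rewrite /= -map_comp -[RHS]map_id; apply: List.map_ext_in => y /u_C[l' <-].
    exact/inv_ptK/block_embed_onto.
  have -> : map_tuple g u = map_tuple (block_embed t) v by apply: val_inj; rewrite /= -map_comp.
  by apply/st_rel; rewrite vK.
move: Cg; rewrite -[member i (lift ord0 l)]/(block_embed s (inr (inr (l, j)))) gK /=.
by move=> [l' /member_inj[/(congr1 val) /= /val_inj]].
Qed.

Lemma card_Hn_ge_blocks (H : forall M : Type, structure L M -> Prop) :
  hereditary H -> H M S -> (0 < m)%N -> card_Hn_ge H (c0 + r + k.+1 * m) (INR (m`! ^ k)).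
Proof.
move=> hered HS m_gt0.
have := card_Hn_ge_embeddings (inr (inl (Ordinal m_gt0))) hered HS
  block_embed_inj block_embed_cst block_embed_rel_inj.
by rewrite card_ffun card_Sn !card_sum card_prod !card_ord mulSn.
Qed.
End Blocks.

Lemma card_Hn_ge_of_components (L : language) (H : forall M : Type, structure L M -> Prop)
    (M : Type) (S : structure L M) (k : nat) (C : nat -> M -> Prop) :
  hereditary H -> H M S ->
  (forall j, component S (C j) /\ has_size (C j) k.+1) ->
  (forall i j, i <> j -> ~ (forall x, C i x <-> C j x)) ->
  exists c0, forall r m, (r <= k.+1)%N -> (0 < m)%N ->
    card_Hn_ge H (c0 + r + k.+1 * m) (INR (m`! ^ k)).
Proof.
move=> hered HS C_spec C_dist.
have C_comp j := (C_spec j).1.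
have [x0 _] := (C_comp 0%N).1.
have [c0 /(has_size_enum x0)[cst_pos [cst_pos_inj cst_pos_img]]] := constants_has_size S.
exists c0 => r m r_le m_gt0.
have [g [g_inj g_ncst]] := components_avoiding_constants C_comp C_dist m.+1.
have [e e_spec] := choice (fun j => has_size_enum x0 (C_spec j).2).
have e_C i l : C (g i) (e (g i) l) by apply/(e_spec _).2; exists l.
apply: (@card_Hn_ge_blocks L M S c0 r m k cst_pos cst_pos_inj _ _ (fun i => e (g i))) => //.
- by move=> c; apply/cst_pos_img; exists c.
- move=> p; have [c <-] : exists c, cst S c = cst_pos p by apply/cst_pos_img; exists p.
  by exists c.
- move=> i l i' l' ee'.
  have gg : g i = g i'.
    apply: contrapT => /C_dist; apply; apply: (components_eq (C_comp _) (C_comp _) (e_C i l)).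
    by rewrite ee'.
  by move: ee'; rewrite -(g_inj _ _ gg) => /(e_spec _).1 ->.
- by move=> i l c ec; apply: (g_ncst i c); rewrite -ec.
- move=> i; have -> // : (fun x => exists l, e (g i) l = x) = C (g i).
  by apply: funext => x; apply: propext; split => /(e_spec _).2.
Qed.

Local Open Scope R_scope.

Lemma exp_le (x y : R) : x <= y -> exp x <= exp y.
Proof. by case=> [/exp_increasing/Rlt_le | ->] //; apply: Rle_refl. Qed.

Lemma ln_le (x y : R) : 0 < x -> x <= y -> ln x <= ln y.
Proof. by move=> x_gt0 [/(ln_increasing _ _ x_gt0)/Rlt_le | ->] //; apply: Rle_refl. Qed.

Lemma exp_pow (x : R) (n : nat) : exp x ^ n = exp (INR n * x).
Proof. by rewrite -Rpower_pow; [rewrite /Rpower ln_exp | exact: exp_pos]. Qed.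

Lemma INR_expn (a b : nat) : INR (a ^ b) = INR a ^ b.
Proof. by elim: b => [|b IH] //; rewrite expnS -multE mult_INR IH. Qed.

Lemma pow_le_exp_fact (m : nat) : INR m ^ m <= exp (INR m) * INR m`!.
Proof.
elim: m => [|m IH]; first by rewrite /= exp_0; lra.
have step : INR m.+1 ^ m <= exp 1 * INR m ^ m.
  case: m {IH} => [|m]; first by rewrite /=; have := exp_ineq1_le 1; lra.
  have hm : 0 < INR m.+1 by apply: lt_0_INR; lia.
  have -> : INR m.+2 = INR m.+1 * (1 + / INR m.+1) by rewrite S_INR; field; lra.
  rewrite Rpow_mult_distr Rmult_comm; apply: Rmult_le_compat_r; first by apply: pow_le; lra.
  have -> : exp 1 = exp (/ INR m.+1) ^ m.+1 by rewrite exp_pow Rinv_r //; lra.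
  apply: pow_incr; have := exp_ineq1_le (/ INR m.+1); have := Rinv_0_lt_compat _ hm; lra.
rewrite factS -multE mult_INR.
change (INR m.+1 ^ m.+1) with (INR m.+1 * INR m.+1 ^ m).
have -> : exp (INR m.+1) = exp 1 * exp (INR m) by rewrite S_INR exp_plus Rmult_comm.
have hm := pos_INR m.+1; have he := exp_pos 1.
apply: (Rle_trans _ (INR m.+1 * (exp 1 * INR m ^ m))); first exact: Rmult_le_compat_l.
rewrite -Rmult_assoc; eapply Rle_trans.
  exact: Rmult_le_compat_l (Rmult_le_pos _ _ hm (Rlt_le _ _ he)) IH.
by right; ring.
Qed.

Lemma ln_fact_ge (m : nat) : (0 < m)%N -> INR m * ln (INR m) - INR m <= ln (INR m`!).
Proof.
move=> m_gt0; have hm : 0 < INR m by apply: lt_0_INR; lia.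
have hf : 0 < INR m`! by apply: lt_0_INR; apply/ltP; exact: fact_gt0.
have := ln_le (pow_lt _ m hm) (pow_le_exp_fact m).
rewrite ln_pow // ln_mult ?ln_exp //; [lra | exact: exp_pos].
Qed.

Lemma nlnn_le_mlnm (k B n m eps : R) :
  2 <= k -> 0 < eps -> 0 <= B -> 0 < n -> 2 * B <= n -> 2 * B <= eps * n ->
  ln (2 * k) + 1 <= ln n -> 2 * (ln (2 * k) + 1) <= eps * ln n ->
  n <= k * m + B ->
  (1 - 1 / k - eps) * n * ln n <= (k - 1) * (m * ln m - m).
Proof.
(* Since m >= n / (2 k), ln m >= ln n - ln (2 k); the hypotheses on ln n
   absorb this loss and the one from B. *)
move=> hk heps hB hn hBn hBe hDn hDe hnm; set D := ln (2 * k) + 1 in hDn hDe.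
have hD : 1 <= D by have := @ln_le 1 (2 * k) Rlt_0_1 ltac:(lra); rewrite ln_1 /D; lra.
have hm : n / (2 * k) <= m.
  apply: (Rmult_le_reg_r (2 * k)); first lra.
  rewrite /Rdiv Rmult_assoc Rinv_l; lra.
have hm0 : 0 < m by apply: Rlt_le_trans hm; apply: Rdiv_lt_0_compat; lra.
have hlnm : ln n - D + 1 <= ln m.
  apply: Rle_trans (ln_le _ hm); last by apply: Rdiv_lt_0_compat; lra.
  have h2k : 0 < 2 * k by lra.
  rewrite /Rdiv ln_mult // ?ln_Rinv // /D; [lra | exact: Rinv_0_lt_compat].
have hq : 0 < 1 / k <= 1 / 2.
  split; first by apply: Rdiv_lt_0_compat; lra.
  by apply: Rmult_le_compat_l; [lra | apply: Rinv_le_contravar; lra].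
have hkm : (1 - 1 / k) * (n - B) <= (k - 1) * m.
  have -> : (k - 1) * m = (1 - 1 / k) * (k * m) by field; lra.
  apply: Rmult_le_compat_l; lra.
have hprod : (1 - 1 / k) * (n - B) * (ln n - D) <= (k - 1) * m * (ln m - 1).
  by apply: Rmult_le_compat => //; try lra; apply: Rmult_le_pos; lra.
have h1 : n * (2 * D) <= n * (eps * ln n) by apply: Rmult_le_compat_l; lra.
have h2 : 2 * B * ln n <= eps * n * ln n by apply: Rmult_le_compat_r; lra.
have h3 : 0 <= 1 / k * (n * D + B * ln n).
  by apply: Rmult_le_pos; [lra | apply: Rplus_le_le_0_compat; apply: Rmult_le_pos; lra].
have h4 : 0 <= (1 - 1 / k) * B * D by apply: Rmult_le_pos; [apply: Rmult_le_pos|]; lra.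
have -> : (k - 1) * (m * ln m - m) = (k - 1) * m * (ln m - 1) by ring.
nra.
Qed.

Lemma Rpower_le_fact_pow (k B : nat) (eps : R) : (2 <= k)%N -> 0 < eps ->
  exists N : nat, forall n m : nat, (N <= n)%N -> (n <= k * m + B)%N ->
    Rpower (INR n) ((1 - 1 / INR k - eps) * INR n) <= INR (m`! ^ k.-1).
Proof.
move=> k_ge2 heps; have hk : 2 <= INR k by apply: (le_INR 2); apply/leP.
set D := ln (2 * INR k) + 1.
have hD : 0 <= D by have := @ln_le 1 (2 * INR k) Rlt_0_1 ltac:(lra); rewrite ln_1 /D; lra.
have hB := pos_INR B.
have hBe : 0 <= 2 * INR B / eps by apply: Rmult_le_pos; [lra | apply/Rlt_le/Rinv_0_lt_compat].
have [N hN] := INR_unbounded (1 + 2 * INR B + 2 * INR B / eps + exp (D * (1 + 2 / eps))).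
exists N => n m /leP/le_INR hNn /leP/le_INR hnm.
have hexp := exp_pos (D * (1 + 2 / eps)).
have hn : 1 + 2 * INR B + 2 * INR B / eps + exp (D * (1 + 2 / eps)) < INR n by lra.
have hlnn : D * (1 + 2 / eps) <= ln (INR n).
  by rewrite -[X in X <= _]ln_exp; apply: ln_le => //; lra.
have m_gt0 : (0 < m)%N.
  rewrite lt0n; apply/negP => /eqP m0; move: hnm; rewrite m0 muln0 add0n; lra.
have hepsn : 2 * INR B <= eps * INR n.
  have -> : 2 * INR B = eps * (2 * INR B / eps) by field; lra.
  by apply: Rmult_le_compat_l; lra.
have hD2 : 0 <= D * (2 / eps).
  by apply: Rmult_le_pos => //; apply: Rmult_le_pos; [lra | apply/Rlt_le/Rinv_0_lt_compat].
have hDn : 2 * D <= eps * ln (INR n).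
  have -> : 2 * D = eps * (D * (2 / eps)) by field; lra.
  by apply: Rmult_le_compat_l; lra.
have hkmB : INR n <= INR k * INR m + INR B by rewrite -mult_INR -plus_INR.
have hlog : (1 - 1 / INR k - eps) * INR n * ln (INR n)
             <= (INR k - 1) * (INR m * ln (INR m) - INR m).
  by apply: (nlnn_le_mlnm (B := INR B)) => //; try rewrite -/D; lra.
have hk1 : INR k.-1 = INR k - 1.
  by rewrite -[in RHS](prednK (ltnW k_ge2)) S_INR; ring.
have hfact := @ln_fact_ge m m_gt0.
have fact_gt0 : 0 < INR m`! by apply: lt_0_INR; apply/ltP; exact: fact_gt0.
rewrite INR_expn /Rpower -[X in _ <= X]exp_ln; last exact: pow_lt.
rewrite ln_pow // hk1; apply: exp_le; apply: Rle_trans hlog _.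
by apply: Rmult_le_compat_l => //; lra.
Qed.

Lemma card_Hn_ge_le (L : language) (H : forall M : Type, structure L M -> Prop) n (x y : R) :
  x <= y -> card_Hn_ge H n y -> card_Hn_ge H n x.
Proof. by move=> xy [s [s_uniq [s_H y_le]]]; exists s; do 2!split => //; lra. Qed.

Theorem mainTheorem8 (L : language) (H : forall M : Type, structure L M -> Prop)
    (k : nat) :
  hereditary H -> (2 <= k)%N -> has_inf_components H k ->
  forall eps : R, (0 < eps)%R ->
  exists N : nat, forall n : nat, (N <= n)%N ->
    card_Hn_ge H n (Rpower (INR n) ((1 - 1 / INR k - eps) * INR n)).
Proof.
move=> hered k_ge2 [M [S [HS [C [C_spec C_dist]]]]] eps eps_gt0.
case: k k_ge2 C_spec => [//|k] k_ge2 C_spec.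
have [c0 card_ge] := card_Hn_ge_of_components hered HS C_spec C_dist.
have [N N_spec] := Rpower_le_fact_pow (c0 + k.+1) k_ge2 eps_gt0.
exists (maxn N (c0 + k.+1)) => n; rewrite geq_max => /andP[n_ge n_big].
set m := ((n - c0) %/ k.+1)%N; set r := ((n - c0) %% k.+1)%N.
have r_lt : (r < k.+1)%N by rewrite ltn_pmod.
have n_eq : n = (c0 + r + k.+1 * m)%N.
  by rewrite mulnC -addnA [(r + _)%N]addnC -divn_eq subnKC //; lia.
have m_gt0 : (0 < m)%N by rewrite divn_gt0 //; lia.
apply: card_Hn_ge_le (N_spec n m n_ge _) _; first lia.
by rewrite [in X in card_Hn_ge _ X]n_eq; apply: card_ge => //; exact: ltnW.
Qed.
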